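(* Let $\boldsymbol{\Gamma}$ be a definable (boldface) pointclass that is downward closed with respect to Wadge reducibility. Assume that every $P\in\boldsymbol{\Gamma}([\mathbb{N}]^\mathbb{N})$ is Ramsey (i.e. $\mathrm{HS}(P)\neq\emptyset$) and that for every $h\in[\mathbb{N}]^\mathbb{N}$, $\boldsymbol{\Gamma}([h]^\mathbb{N})=\{P\cap[h]^\mathbb{N}: P\in\boldsymbol{\Gamma}([\mathbb{N}]^\mathbb{N})\}$. If $\mathsf{R}:\subseteq\boldsymbol{\Gamma}([\mathbb{N}]^\mathbb{N})\rightrightarrows[\mathbb{N}]^\mathbb{N}$ is a multivalued function such that $\mathsf{R}(x)=\mathrm{HS}(x)$ for every $x\in\operatorname{dom}(\mathsf{R})$, then $\mathrm{id}_2\not\le_{\mathrm{sW}}\mathsf{R}$. In particular $\mathrm{id}_2$ (and a fortiori $\mathsf{UC}_{\mathbb{N}^\mathbb{N}}$) is not strongly Weihrauch reducible to any of $\mathsf{wFindHS}_{\boldsymbol{\Sigma}^0_1}$, $\mathsf{wFindHS}_{\boldsymbol{\Pi}^0_1}$, $\mathsf{wFindHS}_{\boldsymbol{\Delta}^0_1}$, $\boldsymbol{\Sigma}^0_1\text{-}\mathsf{RT}$, $\boldsymbol{\Delta}^0_1\text{-}\mathsf{RT}$.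
   Context: Strong Weihrauch reducibility: $f\le_{\mathrm{sW}} g$ iff there are computable $\Phi,\Psi$ on Baire space with $\Psi\circ G\circ\Phi$ realizing $f$ for every realizer $G$ of $g$. $\mathrm{id}_2$ is the identity on $\{0,1\}$. The Ramsey space $[\mathbb{N}]^\mathbb{N}$ is the set of strictly increasing functions $\mathbb{N}\to\mathbb{N}$ with Baire-space topology (identified with infinite subsets of $\mathbb{N}$ via ranges); $fg=f\circ g$; $[h]^\mathbb{N}$ is the set of subsequences $hg$, $g\in[\mathbb{N}]^\mathbb{N}$. For $P\subseteq[\mathbb{N}]^\mathbb{N}$, $f$ is homogeneous for $P$ if either $fg\in P$ for all $g\in[\mathbb{N}]^\mathbb{N}$ ($f$ lands in $P$) or $fg\notin P$ for all $g$ ($f$ avoids $P$); $\mathrm{HS}(P)$ is the set of these; for a set $Q\subseteq[h]^\mathbb{N}$, homogeneity is defined analogously within $[h]^\mathbb{N}$. $\boldsymbol{\Gamma}([\mathbb{N}]^\mathbb{N})$ is regarded as a represented space. Open sets of $[\mathbb{N}]^\mathbb{N}$ are named by enumerations of sets of finite strictly increasing strings whose cones have union the set; clopen sets by pairs of names of the set and its complement. $\boldsymbol{\Sigma}^0_1\text{-}\mathsf{RT}(P)=\mathrm{HS}(P)$ for open $P$; $\boldsymbol{\Delta}^0_1\text{-}\mathsf{RT}(D)=\mathrm{HS}(D)$ for clopen $D$; $\mathsf{wFindHS}_{\boldsymbol{\Sigma}^0_1}$ is $P\mapsto\mathrm{HS}(P)\cap P$ on open $P$ with $\mathrm{HS}(P)\subseteq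 P$; $\mathsf{wFindHS}_{\boldsymbol{\Delta}^0_1}$ is the same on clopen inputs; $\mathsf{wFindHS}_{\boldsymbol{\Pi}^0_1}$ is $P\mapsto\mathrm{HS}(P)\setminus P$ on open $P$ with $\mathrm{HS}(P)\cap P=\emptyset$. $\mathsf{UC}_{\mathbb{N}^\mathbb{N}}$: given a name of a closed singleton subset of $\mathbb{N}^\mathbb{N}$, output its element. *)

From Stdlib Require Import List Arith.
Import ListNotations.

(* Partial recursive functions (Kleene mu-recursion), arity-free:      *)
(* arguments are a list, missing arguments read as 0.                  *)
Inductive rf : Type :=
| rf_zero
| rf_succ
| rf_proj (i : nat)
| rf_comp (f : rf) (gs : list rf)
| rf_prec (f g : rf)
| rf_min (f : rf).

Inductive reval : rf -> list nat -> nat -> Prop :=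
| ev_zero xs : reval rf_zero xs 0
| ev_succ xs : reval rf_succ xs (S (nth 0 xs 0))
| ev_proj i xs : reval (rf_proj i) xs (nth i xs 0)
| ev_comp f gs xs ys y :
    revals gs xs ys -> reval f ys y -> reval (rf_comp f gs) xs y
| ev_prec0 f g xs y :
    reval f xs y -> reval (rf_prec f g) (0 :: xs) y
| ev_precS f g n xs z y :
    reval (rf_prec f g) (n :: xs) z -> reval g (n :: z :: xs) y ->
    reval (rf_prec f g) (S n :: xs) y
| ev_min f xs y :
    reval f (y :: xs) 0 ->
    (forall z, z < y -> exists w, reval f (z :: xs) (S w)) ->
    reval (rf_min f) xs y
with revals : list rf -> list nat -> list nat -> Prop :=
| evs_nil xs : revals nil xs nil
| evs_cons g gs xs y ys :
    reval g xs y -> revals gs xs ys -> revals (g :: gs) xs (y :: ys).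

Definition cpair (x y : nat) : nat := (x + y) * S (x + y) / 2 + y.
Fixpoint code_list (l : list nat) : nat :=
  match l with nil => 0 | x :: l' => S (cpair x (code_list l')) end.
Definition prefix (p : nat -> nat) (k : nat) : list nat := map p (seq 0 k).

(* The partial functional Baire -> Baire computed by the (oracle) program e:
   output value q n = m iff, scanning longer and longer prefixes of p,
   e answers 0 ("need more") until it answers m+1. *)
Definition fcomputes (e : rf) (p q : nat -> nat) : Prop :=
  forall n, exists k,
    reval e [n; code_list (prefix p k)] (S (q n)) /\
    forall j, j < k -> reval e [n; code_list (prefix p j)] 0.

Definition rep (X : Type) := (nat -> nat) -> X -> Prop.

(* Multivalued f :⊆ X ⇉ Y as a relation; dom f = {x | exists y, f x y}. *)
Definition realizer {Z W : Type} (dZ : rep Z) (dW : rep W)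
    (g : Z -> W -> Prop) (G : (nat -> nat) -> option (nat -> nat)) : Prop :=
  forall p z, dZ p z -> (exists w, g z w) ->
    exists q, G p = Some q /\ exists w, g z w /\ dW q w.

Definition sW_le {X Y Z W : Type} (dX : rep X) (dY : rep Y) (f : X -> Y -> Prop)
    (dZ : rep Z) (dW : rep W) (g : Z -> W -> Prop) : Prop :=
  exists ePhi ePsi : rf,
    forall G, realizer dZ dW g G ->
      forall p x, dX p x -> (exists y, f x y) ->
        exists q, fcomputes ePhi p q /\
        exists q', G q = Some q' /\
        exists r, fcomputes ePsi q' r /\
        exists y, f x y /\ dY r y.

Definition delta_2 : rep bool := fun p b => p 0 = (if b then 1 else 0).
Definition id2 : bool -> bool -> Prop := fun a b => a = b.

(* The Ramsey space [N]^N : strictly increasing functions.            *)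
Definition incr (f : nat -> nat) : Prop := forall n, f n < f (S n).
Definition delta_RS : rep (nat -> nat) := fun p f => incr f /\ forall n, p n = f n.

Definition HS (P : (nat -> nat) -> Prop) (f : nat -> nat) : Prop :=
  incr f /\
  ((forall g, incr g -> P (fun n => f (g n))) \/
   (forall g, incr g -> ~ P (fun n => f (g n)))).

Definition sub_cone (h f : nat -> nat) : Prop :=
  exists g, incr g /\ forall n, f n = h (g n).

Definition is_pointclass_rep (Gamma : ((nat -> nat) -> Prop) -> Prop)
    (delta : rep ((nat -> nat) -> Prop)) : Prop :=
  (forall P, Gamma P -> forall f, P f -> incr f) /\
  (forall p P, delta p P -> Gamma P) /\
  (forall P, Gamma P -> exists p, delta p P) /\
  (forall p P Q, delta p P -> delta p Q -> forall f, P f <-> Q f).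

Definition continuous_RS (F : (nat -> nat) -> (nat -> nat)) : Prop :=
  (forall f, incr f -> incr (F f)) /\
  (forall f, incr f -> forall n, exists m, forall g, incr g ->
     (forall i, i < m -> f i = g i) -> forall i, i < n -> F f i = F g i).

Definition wadge_le (Q P : (nat -> nat) -> Prop) : Prop :=
  exists F, continuous_RS F /\ forall f, incr f -> (Q f <-> P (F f)).

Definition wadge_downward_closed (Gamma : ((nat -> nat) -> Prop) -> Prop) : Prop :=
  forall P Q, Gamma P -> (forall f, Q f -> incr f) -> wadge_le Q P -> Gamma Q.

Definition all_ramsey (Gamma : ((nat -> nat) -> Prop) -> Prop) : Prop :=
  forall P, Gamma P -> exists f, HS P f.

(* Gamma([h]^N) is the transfer of Gamma([N]^N) along the homeomorphism
   g |-> h g from [N]^N onto [h]^N; the hypothesis says it coincides with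
   the traces {P ∩ [h]^N : P in Gamma([N]^N)}. *)
Definition restriction_property (Gamma : ((nat -> nat) -> Prop) -> Prop) : Prop :=
  forall h, incr h -> forall S : (nat -> nat) -> Prop,
    (exists Q, Gamma Q /\
       forall f, S f <-> exists g, Q g /\ forall n, f n = h (g n)) <->
    (exists P, Gamma P /\ forall f, S f <-> P f /\ sub_cone h f).

Fixpoint sincr_list (l : list nat) : Prop :=
  match l with
  | nil => True
  | x :: l' => (match l' with nil => True | y :: _ => x < y end) /\ sincr_list l'
  end.

Definition is_prefix (s : list nat) (f : nat -> nat) : Prop :=
  forall i, i < length s -> nth i s 0 = f i.

Definition delta_open : rep ((nat -> nat) -> Prop) := fun p P =>
  (forall n, p n = 0 \/ exists s, sincr_list s /\ p n = S (code_list s)) /\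
  (forall f, P f <-> incr f /\ exists n s, p n = S (code_list s) /\ is_prefix s f).

Definition delta_clopen : rep ((nat -> nat) -> Prop) := fun p P =>
  delta_open (fun n => p (2 * n)) P /\
  delta_open (fun n => p (2 * n + 1)) (fun f => incr f /\ ~ P f).

Definition is_open (P : (nat -> nat) -> Prop) : Prop := exists p, delta_open p P.
Definition is_clopen (P : (nat -> nat) -> Prop) : Prop := exists p, delta_clopen p P.

Definition wFindHS_Sigma01 (P : (nat -> nat) -> Prop) (f : nat -> nat) : Prop :=
  is_open P /\ (forall g, HS P g -> P g) /\ HS P f /\ P f.
Definition wFindHS_Pi01 (P : (nat -> nat) -> Prop) (f : nat -> nat) : Prop :=
  is_open P /\ (forall g, HS P g -> ~ P g) /\ HS P f /\ ~ P f.
Definition wFindHS_Delta01 (P : (nat -> nat) -> Prop) (f : nat -> nat) : Prop :=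
  is_clopen P /\ (forall g, HS P g -> P g) /\ HS P f /\ P f.
Definition Sigma01_RT (P : (nat -> nat) -> Prop) (f : nat -> nat) : Prop :=
  is_open P /\ HS P f.
Definition Delta01_RT (P : (nat -> nat) -> Prop) (f : nat -> nat) : Prop :=
  is_clopen P /\ HS P f.

(* UC_{N^N}: closed subsets of Baire space named by enumerations of   *)
(* strings whose cones cover the complement; output by identity.      *)
Definition delta_Baire : rep (nat -> nat) := fun p x => forall n, p n = x n.
Definition delta_closed : rep ((nat -> nat) -> Prop) := fun p A =>
  forall x, A x <-> ~ exists n s, p n = S (code_list s) /\ is_prefix s x.
Definition UC_Baire (A : (nat -> nat) -> Prop) (x : nat -> nat) : Prop :=
  forall y, A y <-> (forall n, y n = x n).

(* Realizers are arbitrary partial functions on Baire space, so a realizer of HS may answer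
   any two names [q0], [q1] with one and the same homogeneous set, provided the two named
   sets have a common homogeneous set.  They do when the named sets come from a class that
   is Ramsey and closed under pullback along [g |-> f g]: first homogenize one set, then,
   inside the resulting [f], the pullback of the other.  Now if [Phi], [Psi] witnessed a
   strong reduction, let [q0], [q1] be the [Phi]-images of names of two instances with
   disjoint sets of solution names, and take a realizer answering [q0] and [q1] alike; since
   [Phi] and [Psi] are single-valued, [Psi] would map that common answer to a name of a
   solution of both instances.  For the concrete problems the class is that of open sets,
   which are Ramsey by the Galvin-Prikry theorem (combinatorial forcing with accepted and
   rejected finite stems). *)

From Stdlib Require Import List Arith Lia FunctionalExtensionality ClassicalEpsilon Cantor Sorted.
Import ListNotations.

(** * Strong reductions to problems with shared solutions *)

Fixpoint reval_functional e xs y (d : reval e xs y) {struct d} :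
  forall y', reval e xs y' -> y = y'
with revals_functional gs xs ys (d : revals gs xs ys) {struct d} :
  forall ys', revals gs xs ys' -> ys = ys'.
Proof.
- destruct d as [| | |f gs xs ys y dgs df|f g xs y df|f g n xs z y dprec dg|f xs y dzero dpos];
    intros y' d'; inversion d'; subst; try reflexivity.
  + assert (ys = ys0) as <- by (apply (revals_functional _ _ _ dgs); assumption).
    apply (reval_functional _ _ _ df); assumption.
  + apply (reval_functional _ _ _ df); assumption.
  + assert (z = z0) as <- by (apply (reval_functional _ _ _ dprec); assumption).
    apply (reval_functional _ _ _ dg); assumption.
  + match goal with
    | Hz : reval f (y' :: xs) 0, Hpos : forall z, z < y' -> _ |- _ =>
        rename Hz into dzero', Hpos into dpos'
    end.
    destruct (Nat.lt_trichotomy y y') as [lt|[eq|gt]]; [exfalso| exact eq| exfalso].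
    * destruct (dpos' y lt) as [w dw].
      discriminate (reval_functional _ _ _ dzero _ dw).
    * destruct (dpos y' gt) as [w dw].
      discriminate (reval_functional _ _ _ dw _ dzero').
- destruct d as [xs|g gs xs y ys dg dgs]; intros ys' d'; inversion d'; subst; f_equal.
  + apply (reval_functional _ _ _ dg); assumption.
  + apply (revals_functional _ _ _ dgs); assumption.
Qed.

Lemma fcomputes_functional e p q q' : fcomputes e p q -> fcomputes e p q' -> q = q'.
Proof.
  intros Hq Hq'. apply functional_extensionality. intro n.
  destruct (Hq n) as [k [dk before]], (Hq' n) as [k' [dk' before']].
  destruct (Nat.lt_trichotomy k k') as [lt|[<-|gt]].
  - discriminate (reval_functional _ _ _ dk _ (before' k lt)).
  - injection (reval_functional _ _ _ dk _ dk'); trivial.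
  - discriminate (reval_functional _ _ _ dk' _ (before k' gt)).
Qed.

Definition solves_named {Z : Type} (dZ : rep Z) (g : Z -> (nat -> nat) -> Prop)
    (q h : nat -> nat) : Prop :=
  forall z, dZ q z -> (exists w, g z w) -> g z h.

Definition shared_solutions {Z : Type} (dZ : rep Z) (g : Z -> (nat -> nat) -> Prop) : Prop :=
  forall q0 q1, exists h, incr h /\ solves_named dZ g q0 h /\ solves_named dZ g q1 h.

Lemma realizer_merging {Z : Type} (dZ : rep Z) g q0 q1 :
  shared_solutions dZ g ->
  exists G h, realizer dZ delta_RS g G /\ G q0 = Some h /\ G q1 = Some h.
Proof.
  intros shared.
  destruct (choice (fun q h => incr h /\ solves_named dZ g q h)) as [sol Hsol].
  { intros q. destruct (shared q q) as [h [Ih [Sh _]]]. eauto. }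
  destruct (shared q0 q1) as [h [Ih [S0 S1]]].
  set (G := fun q => Some (if excluded_middle_informative (q = q0 \/ q = q1) then h else sol q)).
  assert (G_solves : forall q, exists h', G q = Some h' /\ incr h' /\ solves_named dZ g q h').
  { intros q. unfold G. destruct excluded_middle_informative as [[-> | ->]|_]; eauto. }
  exists G, h. split; [|unfold G; split; destruct excluded_middle_informative; tauto].
  intros q z Hz dom. destruct (G_solves q) as [h' [-> [Ih' Sh']]].
  exists h'. split; [reflexivity|]. exists h'. repeat split; auto.
Qed.

Lemma not_sW_le_of_shared_solutions {X Y Z : Type} (dX : rep X) (dY : rep Y)
    (f : X -> Y -> Prop) (dZ : rep Z) (g : Z -> (nat -> nat) -> Prop) p0 x0 p1 x1 :
  shared_solutions dZ g ->
  dX p0 x0 -> dX p1 x1 -> (exists y, f x0 y) -> (exists y, f x1 y) ->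
  (forall r y0 y1, f x0 y0 -> dY r y0 -> f x1 y1 -> dY r y1 -> False) ->
  ~ sW_le dX dY f dZ delta_RS g.
Proof.
  intros shared Hp0 Hp1 dom0 dom1 separated [ePhi [ePsi red]].
  destruct (realizer_merging dZ g p0 p1 shared) as [G0 [_ [RG0 _]]].
  destruct (red G0 RG0 p0 x0 Hp0 dom0) as [q0 [Phi0 _]].
  destruct (red G0 RG0 p1 x1 Hp1 dom1) as [q1 [Phi1 _]].
  destruct (realizer_merging dZ g q0 q1 shared) as [G [h [RG [G0h G1h]]]].
  destruct (red G RG p0 x0 Hp0 dom0) as [q0' [Phi0' [h0 [Gh0 [r0 [Psi0 [y0 [f0 d0]]]]]]]].
  destruct (red G RG p1 x1 Hp1 dom1) as [q1' [Phi1' [h1 [Gh1 [r1 [Psi1 [y1 [f1 d1]]]]]]]].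
  rewrite <- (fcomputes_functional _ _ _ _ Phi0 Phi0'), G0h in Gh0.
  rewrite <- (fcomputes_functional _ _ _ _ Phi1 Phi1'), G1h in Gh1.
  injection Gh0 as <-. injection Gh1 as <-.
  rewrite <- (fcomputes_functional _ _ _ _ Psi0 Psi1) in d1.
  exact (separated r0 y0 y1 f0 d0 f1 d1).
Qed.

Lemma id2_not_sW_le {Z : Type} (dZ : rep Z) g :
  shared_solutions dZ g -> ~ sW_le delta_2 delta_2 id2 dZ delta_RS g.
Proof.
  intros shared.
  apply (not_sW_le_of_shared_solutions _ _ _ _ _ (fun _ => 0) false (fun _ => 1) true shared);
    try reflexivity; try (eexists; reflexivity).
  unfold id2, delta_2. intros r y0 y1 <- d0 <- d1. congruence.
Qed.

(** * Names of constant functions *)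

Lemma code_list_inj l l' : code_list l = code_list l' -> l = l'.
Proof.
  revert l'; induction l as [|x l IH]; intros [|x' l'] E; try discriminate; trivial.
  injection E as E.
  assert (Ep : to_nat (x, code_list l) = to_nat (x', code_list l')).
  { rewrite !to_nat_spec2. unfold cpair in E.
    rewrite (Nat.add_comm (code_list l) x), (Nat.add_comm (code_list l') x'). lia. }
  injection (to_nat_inj _ _ Ep) as -> El. f_equal. exact (IH _ El).
Qed.

(* The complement of [{fun _ => c}] is the union of the cones over [c^a ++ [b]], [b <> c],
   enumerated along the Cantor pairing [n = to_nat (a, b)]. *)
Definition const_name (c : nat) : nat -> nat := fun n =>
  let (a, b) := of_nat n in
  if b =? c then 0 else S (code_list (repeat c a ++ [b])).

Lemma first_deviation (x : nat -> nat) c n :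
  x n <> c -> exists k, x k <> c /\ forall i, i < k -> x i = c.
Proof.
  induction n as [n IH] using lt_wf_ind. intros Hn.
  destruct (classic (exists i, i < n /\ x i <> c)) as [[i [lt Hi]]|none].
  - exact (IH i lt Hi).
  - exists n. split; trivial. intros i lt. apply NNPP. eauto.
Qed.

Lemma const_name_spec c : delta_closed (const_name c) (fun y => forall n, y n = c).
Proof.
  intro y. split.
  - intros Hy [n [s [E pre]]]. unfold const_name in E.
    destruct (of_nat n) as [a b]. destruct (b =? c) eqn:bc; [discriminate|].
    apply Nat.eqb_neq in bc. injection E as E. apply code_list_inj in E as <-.
    specialize (pre a). rewrite length_app, repeat_length, app_nth2, repeat_length, Nat.sub_diag,
      Hy in pre by (rewrite ?repeat_length; simpl; lia).
    apply bc, pre. simpl. lia.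
  - intros no_cone n. apply NNPP. intros Hn.
    destruct (first_deviation y c n Hn) as [k [Hk before]].
    apply no_cone. exists (to_nat (k, y k)), (repeat c k ++ [y k]). split.
    + unfold const_name. rewrite cancel_of_to. destruct (Nat.eqb_spec (y k) c); tauto.
    + intros i Hi. rewrite length_app, repeat_length in Hi. simpl in Hi.
      destruct (Nat.lt_ge_cases i k).
      * rewrite app_nth1, nth_repeat_lt by (rewrite ?repeat_length; lia). symmetry; auto.
      * replace i with k by lia.
        rewrite app_nth2, repeat_length, Nat.sub_diag by (rewrite repeat_length; lia). reflexivity.
Qed.

Lemma UC_Baire_not_sW_le {Z : Type} (dZ : rep Z) g :
  shared_solutions dZ g -> ~ sW_le delta_closed delta_Baire UC_Baire dZ delta_RS g.
Proof.
  intros shared.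
  apply (not_sW_le_of_shared_solutions _ _ _ _ _ (const_name 0) (fun y => forall n, y n = 0)
           (const_name 1) (fun y => forall n, y n = 1) shared); try apply const_name_spec.
  - exists (fun _ => 0). intro y. reflexivity.
  - exists (fun _ => 1). intro y. reflexivity.
  - intros r y0 y1 UC0 d0 UC1 d1.
    assert (r 0 = 0) by (rewrite d0; symmetry; apply (proj1 (UC0 (fun _ => 0))); now intro).
    assert (r 0 = 1) by (rewrite d1; symmetry; apply (proj1 (UC1 (fun _ => 1))); now intro).
    congruence.
Qed.

(** * Infinite subsets and finite stems *)

Lemma incr_lt f i j : incr f -> i < j -> f i < f j.
Proof.
  intros If lt. induction lt as [|j _ IH]; [apply If|].
  specialize (If j). lia.
Qed.

Lemma incr_le f i j : incr f -> i <= j -> f i <= f j.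
Proof.
  intros If le. destruct (Nat.eq_dec i j) as [->|ne]; [lia|].
  apply Nat.lt_le_incl, incr_lt; [exact If|lia].
Qed.

Lemma incr_lt_iff f i j : incr f -> f i < f j <-> i < j.
Proof.
  intros If. split; [|apply incr_lt; exact If].
  intros lt. destruct (Nat.lt_trichotomy i j) as [?|[->|gt]]; [trivial|lia|].
  pose proof (incr_lt f j i If gt). lia.
Qed.

Lemma incr_ge_id f n : incr f -> n <= f n.
Proof. intros If. induction n as [|n IH]; [lia|]. specialize (If n). lia. Qed.

Lemma incr_comp f g : incr f -> incr g -> incr (fun n => f (g n)).
Proof. intros If Ig n. apply incr_lt; auto. Qed.

Lemma incr_iter (F : nat -> nat) x : (forall n, n < F n) -> incr (fun k => Nat.iter k F x).
Proof. intros HF k. apply HF. Qed.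

Definition shift (A : nat -> nat) (k : nat) : nat -> nat := fun n => A (n + k).

Lemma incr_shift A k : incr A -> incr (shift A k).
Proof. intros IA n. apply IA. Qed.

(** [C] is an infinite subset of [A], both given by increasing enumerations. *)
Definition subseq (C A : nat -> nat) : Prop := incr C /\ forall n, exists i, C n = A i.

Lemma subseq_refl A : incr A -> subseq A A.
Proof. intros IA. split; [exact IA|]. intro n. exists n; reflexivity. Qed.

Lemma subseq_trans C B A : subseq C B -> subseq B A -> subseq C A.
Proof.
  intros [IC CB] [_ BA]. split; trivial. intro n.
  destruct (CB n) as [i ->]. exact (BA i).
Qed.

Lemma subseq_shift A k : incr A -> subseq (shift A k) A.
Proof. intros IA. split; [apply incr_shift, IA|]. intro n. eexists; reflexivity. Qed.

Lemma subseq_comp h g : incr h -> incr g -> subseq (fun n => h (g n)) h.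
Proof. intros Ih Ig. split; [apply incr_comp; trivial|]. intro n. exists (g n); reflexivity. Qed.

Definition in_range (B : nat -> nat) (x : nat) : Prop := exists i, x = B i.

(** Finite sets are listed in decreasing order, so that a new maximum is added by [cons]. *)
Definition stem : list nat -> Prop := StronglySorted gt.

Definition scons (x : nat) (C : nat -> nat) : nat -> nat :=
  fun n => match n with 0 => x | S n => C n end.

(** [ext s C] enumerates the stem [s] in increasing order, followed by [C]. *)
Fixpoint ext (s : list nat) (C : nat -> nat) : nat -> nat :=
  match s with [] => C | x :: s => ext s (scons x C) end.

Lemma ext_cons_shift s D : ext (D 0 :: s) (shift D 1) = ext s D.
Proof.
  simpl. f_equal. apply functional_extensionality. intros [|n]; trivial.
  unfold shift; simpl. f_equal. lia.
Qed.

Lemma ext_at_length s F n : ext s F (length s + n) = F n.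
Proof.
  revert F n. induction s as [|x s IH]; intros F n; trivial.
  simpl. rewrite <- Nat.add_succ_r, IH. reflexivity.
Qed.

Lemma ext_agree s D E n : n < length s -> ext s D n = ext s E n.
Proof.
  revert D E. induction s as [|x s IH]; intros D E lt; simpl in lt; [lia|simpl].
  destruct (Nat.lt_ge_cases n (length s)) as [lt'|ge]; [apply IH, lt'|].
  replace n with (length s + 0) by lia. rewrite !ext_at_length. reflexivity.
Qed.

Fixpoint rev_prefix (C : nat -> nat) (k : nat) : list nat :=
  match k with 0 => [] | S k => C k :: rev_prefix C k end.

Lemma length_rev_prefix C k : length (rev_prefix C k) = k.
Proof. induction k; simpl; auto. Qed.

Lemma in_rev_prefix C k x : In x (rev_prefix C k) <-> exists j, j < k /\ x = C j.
Proof.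
  induction k as [|k IH]; simpl.
  - split; [tauto|]. intros [j [lt _]]. lia.
  - rewrite IH. split.
    + intros [<-|[j [lt ->]]]; [exists k|exists j]; split; auto; lia.
    + intros [j [lt ->]]. destruct (Nat.eq_dec j k) as [->|ne]; [now left|right].
      exists j. split; auto; lia.
Qed.

Lemma stem_rev_prefix C k : incr C -> stem (rev_prefix C k).
Proof.
  intros IC. induction k as [|k IH]; constructor; trivial.
  apply Forall_forall. intros x Hx. apply in_rev_prefix in Hx as [j [lt ->]].
  apply incr_lt; trivial.
Qed.

Lemma ext_rev_prefix_shift C k : ext (rev_prefix C k) (shift C k) = C.
Proof.
  induction k as [|k IH]; simpl.
  - apply functional_extensionality. intro n. unfold shift. f_equal. lia.
  - transitivity (ext (rev_prefix C k) (shift C k)); [|exact IH].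
    f_equal. apply functional_extensionality.
    intros [|n]; unfold shift; simpl; f_equal; lia.
Qed.

Fixpoint stems_below (m : nat) : list (list nat) :=
  match m with
  | 0 => [[]]
  | S m => stems_below m ++ map (cons m) (stems_below m)
  end.

Lemma in_stems_below m s : stem s -> Forall (gt m) s -> In s (stems_below m).
Proof.
  revert s. induction m as [|m IH]; intros s st below.
  - destruct below as [|x s lt]; [now left|lia].
  - simpl. apply in_or_app. destruct st as [|x s st sx]; [left; apply IH; constructor|].
    apply Forall_cons_iff in below as [xm _].
    destruct (Nat.eq_dec x m) as [->|ne].
    + right. apply in_map, IH; trivial.
    + left. apply IH; [now constructor|]. constructor; [lia|].
      eapply Forall_impl; [|exact sx]. unfold gt. lia.
Qed.

Lemma Forall_gt_list_max s m : list_max s < m -> Forall (gt m) s.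
Proof.
  intros lt. eapply Forall_impl; [|apply (list_max_le s (list_max s)), le_n].
  unfold gt. lia.
Qed.

Lemma eventually_forall_in {X : Type} (L : list X) (Q : X -> nat -> Prop) :
  (forall x, In x L -> exists N, forall n, N <= n -> Q x n) ->
  exists N, forall x, In x L -> forall n, N <= n -> Q x n.
Proof.
  induction L as [|x L IH]; intros ev; [exists 0; intros ? []|].
  destruct (ev x (or_introl eq_refl)) as [N1 H1].
  destruct IH as [N2 H2]; [intros y Hy; apply ev; now right|].
  exists (N1 + N2). intros y [<-|Hy] n le; [apply H1|apply H2]; auto; lia.
Qed.

Lemma subseq_of_infinitely_many (good : nat -> Prop) B :
  incr B -> (forall N, exists n, N <= n /\ good n) ->
  exists C, subseq C B /\ forall k, exists n, C k = B n /\ good n.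
Proof.
  intros IB often. destruct (choice _ often) as [c Hc].
  set (idx := fun k => Nat.iter k (fun i => c (S i)) (c 0)).
  assert (Iidx : incr idx) by (apply incr_iter; intro i; apply (Hc (S i))).
  exists (fun k => B (idx k)). split; [split|].
  - apply incr_comp; trivial.
  - eauto.
  - intros [|k]; eexists; split; [reflexivity| apply Hc | reflexivity | apply Hc].
Qed.

(** * Open sets are Ramsey *)

Definition open_set (P : (nat -> nat) -> Prop) : Prop :=
  forall g, P g -> exists k, forall g', (forall i, i < k -> g' i = g i) -> P g'.

Section OpenRamsey.

Variable P : (nat -> nat) -> Prop.
Hypothesis P_open : open_set P.

Definition accepts (A : nat -> nat) (s : list nat) : Prop :=
  forall C, subseq C A -> Forall (gt (C 0)) s -> P (ext s C).

Definition rejects (A : nat -> nat) (s : list nat) : Prop :=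
  forall A', subseq A' A -> ~ accepts A' s.

Definition decides (A : nat -> nat) (s : list nat) : Prop := accepts A s \/ rejects A s.

Lemma accepts_subseq A B s : accepts A s -> subseq B A -> accepts B s.
Proof. intros acc BA C CB. apply acc. exact (subseq_trans _ _ _ CB BA). Qed.

Lemma rejects_subseq A B s : rejects A s -> subseq B A -> rejects B s.
Proof. intros rej BA A' AB. apply rej. exact (subseq_trans _ _ _ AB BA). Qed.

Lemma decides_subseq A B s : decides A s -> subseq B A -> decides B s.
Proof.
  intros [acc|rej] BA; [left; exact (accepts_subseq _ _ _ acc BA)|].
  right; exact (rejects_subseq _ _ _ rej BA).
Qed.

Lemma decides_exists A s : incr A -> exists B, subseq B A /\ decides B s.
Proof.
  intros IA. destruct (classic (rejects A s)) as [rej|not_rej].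
  - exists A. split; [apply subseq_refl, IA|now right].
  - apply not_all_ex_not in not_rej as [B not_rej].
    apply imply_to_and in not_rej as [BA acc].
    exists B. split; [exact BA|left; exact (NNPP _ acc)].
Qed.

Lemma decides_list A L : incr A -> exists B, subseq B A /\ forall s, In s L -> decides B s.
Proof.
  revert A. induction L as [|s L IH]; intros A IA.
  - exists A. split; [apply subseq_refl, IA|intros ? []].
  - destruct (decides_exists A s IA) as [B1 [B1A dec1]].
    destruct (IH B1 (proj1 B1A)) as [B2 [B2B1 dec2]].
    exists B2. split; [exact (subseq_trans _ _ _ B2B1 B1A)|].
    intros t [<-|Ht]; [exact (decides_subseq _ _ _ dec1 B2B1)|exact (dec2 t Ht)].
Qed.

Lemma decides_below A m : incr A ->
  exists B, subseq B A /\ forall s, stem s -> Forall (gt m) s -> decides B s.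
Proof.
  intros IA. destruct (decides_list A (stems_below m) IA) as [B [BA dec]].
  exists B. split; [exact BA|]. intros s st below. apply dec, in_stems_below; trivial.
Qed.

Lemma decides_transfer B T s : decides T s ->
  (forall C, subseq C B -> Forall (gt (C 0)) s -> subseq C T) -> decides B s.
Proof.
  intros [acc|rej] above_in_T; [left|right].
  - intros C CB above. apply acc; auto.
  - intros A' A'B acc'.
    set (A'' := shift A' (S (list_max s))).
    assert (A''A' : subseq A'' A') by apply subseq_shift, (proj1 A'B).
    assert (above : Forall (gt (A'' 0)) s).
    { apply Forall_gt_list_max. pose proof (incr_ge_id A' (S (list_max s)) (proj1 A'B)).
      unfold A'', shift. simpl. lia. }
    apply (rej A''); [apply above_in_T; [exact (subseq_trans _ _ _ A''A' A'B)|exact above]|].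
    exact (accepts_subseq _ _ _ acc' A''A').
Qed.

Definition decides_stems (B : nat -> nat) : Prop :=
  forall a s, stem (a :: s) -> Forall (in_range B) (a :: s) -> decides B (a :: s).

Lemma refinement_deciding_below : exists refine : nat -> (nat -> nat) -> nat -> nat,
  forall m A, incr A -> subseq (refine m A) A /\
    forall s, stem s -> Forall (gt m) s -> decides (refine m A) s.
Proof.
  destruct (choice (fun (mA : nat * (nat -> nat)) B => incr (snd mA) ->
     subseq B (snd mA) /\ forall s, stem s -> Forall (gt (fst mA)) s -> decides B s))
    as [refine Hrefine].
  - intros [m A]. destruct (classic (incr A)) as [IA|not_incr].
    + destruct (decides_below A m IA) as [B HB]. exists B. auto.
    + exists A. simpl. tauto.
  - exists (fun m A => refine (m, A)). intros m A IA. exact (Hrefine (m, A) IA).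
Qed.

(* Stage [k+1] lies in stage [k] beyond its first element [B k] and decides every stem with
   elements [<= B k].  A stem in [B] with maximum [B j] is then decided by stage [j+1],
   which contains every element of [B] above [B j]. *)
Lemma fusion A : incr A -> exists B, subseq B A /\ decides_stems B.
Proof.
  intros IA. destruct refinement_deciding_below as [refine Hrefine].
  set (stage := fun k => Nat.iter k (fun A' => refine (S (A' 0)) (shift A' 1)) A).
  assert (step : forall k, incr (stage k) -> subseq (stage (S k)) (shift (stage k) 1) /\
            forall s, stem s -> Forall (gt (S (stage k 0))) s -> decides (stage (S k)) s).
  { intros k Ik. apply Hrefine, incr_shift, Ik. }
  assert (Istage : forall k, incr (stage k)).
  { induction k as [|k IH]; [exact IA|exact (proj1 (proj1 (step k IH)))]. }
  assert (nested : forall j i, j <= i -> subseq (stage i) (stage j)).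
  { intros j i le. induction le as [|i _ IH]; [apply subseq_refl, Istage|].
    apply (subseq_trans _ _ _ (proj1 (step i (Istage i)))).
    exact (subseq_trans _ _ _ (subseq_shift _ 1 (Istage i)) IH). }
  set (B := fun k => stage k 0).
  assert (B_in_stage : forall j i, j <= i -> in_range (stage j) (B i)).
  { intros j i le. destruct (proj2 (nested j i le) 0) as [m Hm]. exists m. exact Hm. }
  assert (IB : incr B).
  { intro k. destruct (proj2 (proj1 (step k (Istage k))) 0) as [m Hm].
    unfold B. rewrite Hm. unfold shift. apply incr_lt; [apply Istage|lia]. }
  exists B. split.
  - split; [exact IB|]. intro n. exact (B_in_stage 0 n (Nat.le_0_l n)).
  - intros a s st in_B. pose proof (Forall_inv in_B) as [j ->].
    apply (decides_transfer _ (stage (S j))).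
    + apply (step j (Istage j)); trivial. constructor; [unfold B, gt; lia|].
      eapply Forall_impl; [|exact (proj2 (StronglySorted_inv st))]. unfold gt, B. lia.
    + intros C [IC CB] above. split; [exact IC|]. intro n.
      destruct (CB n) as [i Ci]. rewrite Ci. apply B_in_stage.
      apply (incr_lt_iff B); [exact IB|]. rewrite <- Ci.
      pose proof (Forall_inv above). pose proof (incr_le C 0 n IC (Nat.le_0_l n)).
      unfold gt in *. lia.
Qed.

Lemma rejects_cons_eventually B s : incr B -> decides_stems B ->
  rejects B s -> stem s -> Forall (in_range B) s ->
  exists N, forall n, N <= n -> rejects B (B n :: s).
Proof.
  (* Otherwise the [B n] with [B n :: s] accepted form a subsequence accepting [s]. *)
  intros IB dec rej st in_B. apply NNPP. intros never.
  assert (often : forall N, exists n, N <= n /\ Forall (gt (B n)) s /\ accepts B (B n :: s)).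
  { intros N. apply NNPP. intros rarely. apply never.
    exists (max N (S (list_max s))). intros n le.
    assert (above : Forall (gt (B n)) s).
    { apply Forall_gt_list_max. pose proof (incr_ge_id B n IB). lia. }
    assert (st_n : stem (B n :: s)) by now constructor.
    assert (in_B_n : Forall (in_range B) (B n :: s)) by (constructor; [exists n|]; trivial).
    destruct (dec (B n) s st_n in_B_n) as [acc|rej']; [|exact rej'].
    exfalso. apply rarely. exists n. repeat split; trivial. lia. }
  destruct (subseq_of_infinitely_many _ B IB often) as [C [CB good]].
  apply (rej C CB). intros D DC above.
  destruct (proj2 DC 0) as [i Di]. destruct (good i) as [n [Ci [above_n acc_n]]].
  rewrite <- ext_cons_shift, Di, Ci. apply acc_n.
  - apply (subseq_trans _ D); [apply subseq_shift, (proj1 DC)|].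
    exact (subseq_trans _ _ _ DC CB).
  - assert (D0_lt_D1 : D 0 < D 1) by apply (proj1 DC).
    unfold shift. simpl. rewrite Di, Ci in *. constructor; [unfold gt; lia|].
    eapply Forall_impl; [|exact above]. unfold gt. lia.
Qed.

(* The [k]-th element is chosen beyond the threshold of [rejects_cons_eventually] for
   all stems bounded by the previous element. *)
Lemma rejecting_subseq B : incr B -> decides_stems B -> rejects B [] ->
  exists H, subseq H B /\ forall s, stem s -> Forall (in_range H) s -> rejects B s.
Proof.
  intros IB dec rej0.
  assert (thresholds : forall m, exists N, forall s, In s (stems_below m) -> forall n, N <= n ->
            rejects B s -> stem s -> Forall (in_range B) s -> rejects B (B n :: s)).
  { intros m. apply eventually_forall_in. intros s _.
    destruct (classic (rejects B s /\ stem s /\ Forall (in_range B) s))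
      as [[rej [st in_B]]|not_rej].
    - destruct (rejects_cons_eventually B s IB dec rej st in_B) as [N HN]. eauto.
    - exists 0. intros n _ rej st in_B. tauto. }
  destruct (choice _ thresholds) as [N HN].
  set (idx := fun k => Nat.iter k (fun i => max (S i) (N (S (B i)))) (N 0)).
  assert (Iidx : incr idx) by (apply incr_iter; lia).
  set (h := fun k => B (idx k)).
  assert (Ih : incr h) by (unfold h; apply incr_comp; trivial).
  exists h. split; [split; [exact Ih|unfold h; eauto]|].
  induction s as [|a s IHs]; intros st in_H; [exact rej0|].
  destruct (StronglySorted_inv st) as [st_s below_a].
  apply Forall_cons_iff in in_H as [[i ->] in_H].
  set (bound := match i with 0 => 0 | S k => S (h k) end).
  apply (HN bound).
  - apply in_stems_below; [exact st_s|].
    eapply Forall_impl; [|apply Forall_and; [exact in_H|exact below_a]].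
    intros x [[j ->] lt]. apply (incr_lt_iff h j i Ih) in lt.
    destruct i as [|k]; [lia|]. pose proof (incr_le h j k Ih). unfold bound. lia.
  - destruct i; [apply le_n|].
    change (idx (S i)) with (max (S (idx i)) (N (S (B (idx i))))). unfold bound, h. lia.
  - exact (IHs st_s in_H).
  - exact st_s.
  - eapply Forall_impl; [|exact in_H]. intros x [j ->]. exists (idx j). reflexivity.
Qed.

Theorem open_ramsey A : incr A -> exists H, subseq H A /\
  ((forall C, subseq C H -> P C) \/ (forall C, subseq C H -> ~ P C)).
Proof.
  intros IA. destruct (decides_exists A [] IA) as [A0 [A0A dec0]].
  destruct (fusion A0 (proj1 A0A)) as [B [BA0 decB]].
  assert (BA : subseq B A) by exact (subseq_trans _ _ _ BA0 A0A).
  destruct (decides_subseq _ _ _ dec0 BA0) as [acc|rej].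
  - exists B. split; [exact BA|left]. intros C CB. exact (acc C CB (Forall_nil _)).
  - destruct (rejecting_subseq B (proj1 BA) decB rej) as [H [HB rejH]].
    exists H. split; [exact (subseq_trans _ _ _ HB BA)|right]. intros C CH PC.
    destruct (P_open C PC) as [k agree].
    assert (CB : subseq C B) by exact (subseq_trans _ _ _ CH HB).
    apply (rejH (rev_prefix C k) (stem_rev_prefix C k (proj1 CH)) ) with (A' := shift C k).
    + apply Forall_forall. intros x Hx. apply in_rev_prefix in Hx as [j [_ ->]].
      exact (proj2 CH j).
    + exact (subseq_trans _ _ _ (subseq_shift C k (proj1 CH)) CB).
    + intros D DC above. apply agree. intros i lt.
      transitivity (ext (rev_prefix C k) (shift C k) i); [|now rewrite ext_rev_prefix_shift].
      apply ext_agree. rewrite length_rev_prefix. exact lt.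
Qed.

End OpenRamsey.

(** * Classes of names with common homogeneous sets *)

Lemma HS_ext P Q h : (forall f, incr f -> (P f <-> Q f)) -> HS P h -> HS Q h.
Proof.
  intros PQ [Ih [lands|avoids]]; split; trivial; [left|right]; intros g Ig;
    rewrite <- PQ by (apply incr_comp; trivial); auto.
Qed.

Lemma subseq_HS P h : incr h ->
  ((forall C, subseq C h -> P C) \/ (forall C, subseq C h -> ~ P C)) -> HS P h.
Proof.
  intros Ih hom. split; [exact Ih|].
  destruct hom as [lands|avoids]; [left|right]; intros g Ig;
    [apply lands|apply avoids]; apply subseq_comp; trivial.
Qed.

Lemma open_set_HS P : open_set P -> exists h, HS P h.
Proof.
  intros Popen. destruct (open_ramsey P Popen (fun n => n)) as [h [hid hom]]; [intro; lia|].
  exists h. apply subseq_HS; [exact (proj1 hid)|exact hom].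
Qed.

Section RamseyClass.

Variable Cl : ((nat -> nat) -> Prop) -> Prop.
Hypothesis Cl_ramsey : forall P, Cl P -> exists h, HS P h.
Hypothesis Cl_pullback :
  forall P f, Cl P -> incr f -> Cl (fun x => incr x /\ P (fun n => f (x n))).

Lemma HS_common P Q : Cl P -> Cl Q -> exists h, HS P h /\ HS Q h.
Proof.
  intros ClP ClQ. destruct (Cl_ramsey P ClP) as [f [If homP]].
  destruct (Cl_ramsey _ (Cl_pullback Q f ClQ If)) as [g [Ig homQ]].
  exists (fun n => f (g n)). split; split; try (apply incr_comp; trivial).
  - destruct homP as [lands|avoids]; [left|right]; intros k Ik;
      [apply lands|apply avoids]; apply incr_comp; trivial.
  - destruct homQ as [lands|avoids]; [left|right]; intros k Ik.
    + exact (proj2 (lands k Ik)).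
    + intros Qk. apply (avoids k Ik). split; [apply incr_comp|]; trivial.
Qed.

Lemma shared_solutions_of_class (dZ : rep ((nat -> nat) -> Prop)) g :
  (forall q z, dZ q z -> (exists w, g z w) -> Cl z) ->
  (forall q z z', dZ q z -> dZ q z' -> forall f, z f <-> z' f) ->
  (forall z h, (exists w, g z w) -> HS z h -> g z h) ->
  shared_solutions dZ g.
Proof.
  intros dom_Cl names_ext HS_solves.
  assert (named : forall q, (exists z, Cl z /\ forall h, HS z h -> solves_named dZ g q h) \/
                            forall h, solves_named dZ g q h).
  { intros q. destruct (classic (exists z, dZ q z /\ exists w, g z w)) as [[z [Hz dom]]|none].
    - left. exists z. split; [exact (dom_Cl q z Hz dom)|]. intros h Hh z' Hz' dom'.
      apply HS_solves; [exact dom'|]. apply (HS_ext z); [|exact Hh].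
      intros f _. exact (names_ext q z z' Hz Hz' f).
    - right. intros h z Hz dom. exfalso. eauto. }
  intros q0 q1.
  destruct (named q0) as [[z0 [Cl0 sol0]]|sol0], (named q1) as [[z1 [Cl1 sol1]]|sol1].
  - destruct (HS_common z0 z1 Cl0 Cl1) as [h [H0 H1]]. exists h. split; [apply H0|auto].
  - destruct (Cl_ramsey z0 Cl0) as [h H0]. exists h. split; [apply H0|auto].
  - destruct (Cl_ramsey z1 Cl1) as [h H1]. exists h. split; [apply H1|auto].
  - exists (fun n => n). split; [intro; lia|auto].
Qed.

End RamseyClass.

Definition open_on_RS (P : (nat -> nat) -> Prop) : Prop :=
  exists P', open_set P' /\ forall g, incr g -> (P g <-> P' g).

Lemma open_on_RS_ramsey P : open_on_RS P -> exists h, HS P h.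
Proof.
  intros [P' [P'open PP']]. destruct (open_set_HS P' P'open) as [h Hh].
  exists h. apply (HS_ext P'); [|exact Hh]. intros f If. symmetry. exact (PP' f If).
Qed.

Lemma open_on_RS_pullback P f :
  open_on_RS P -> incr f -> open_on_RS (fun x => incr x /\ P (fun n => f (x n))).
Proof.
  intros [P' [P'open PP']] If. exists (fun x => P' (fun n => f (x n))). split.
  - intros g Pg. destruct (P'open _ Pg) as [k agree]. exists k.
    intros g' agree'. apply agree. intros i lt. rewrite agree'; trivial.
  - intros g Ig. rewrite (PP' _ (incr_comp f g If Ig)). tauto.
Qed.

Lemma delta_open_open_on_RS q P : delta_open q P -> open_on_RS P.
Proof.
  intros [_ HP]. exists (fun f => exists n s, q n = S (code_list s) /\ is_prefix s f). split.
  - intros g [n [s [E pre]]]. exists (length s). intros g' agree.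
    exists n, s. split; [exact E|]. intros i lt. rewrite agree; auto.
  - intros g Ig. rewrite HP. tauto.
Qed.

Lemma delta_open_ext q P Q : delta_open q P -> delta_open q Q -> forall f, P f <-> Q f.
Proof. intros [_ HP] [_ HQ] f. rewrite HP, HQ. reflexivity. Qed.

Lemma shared_solutions_open g :
  (forall z h, (exists w, g z w) -> HS z h -> g z h) -> shared_solutions delta_open g.
Proof.
  apply (shared_solutions_of_class open_on_RS open_on_RS_ramsey open_on_RS_pullback).
  - intros q z Hz _. exact (delta_open_open_on_RS q z Hz).
  - exact delta_open_ext.
Qed.

Lemma shared_solutions_clopen g :
  (forall z h, (exists w, g z w) -> HS z h -> g z h) -> shared_solutions delta_clopen g.
Proof.
  apply (shared_solutions_of_class open_on_RS open_on_RS_ramsey open_on_RS_pullback).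
  - intros q z [Hz _] _. exact (delta_open_open_on_RS _ z Hz).
  - intros q z z' [Hz _] [Hz' _]. exact (delta_open_ext _ z z' Hz Hz').
Qed.

Lemma pullback_of_wadge_closed Gamma : wadge_downward_closed Gamma ->
  forall P f, Gamma P -> incr f -> Gamma (fun x => incr x /\ P (fun n => f (x n))).
Proof.
  intros wadge P f GP If. apply (wadge P); [exact GP|now intros g []|].
  exists (fun x n => f (x n)). split; [split|].
  - intros x Ix. apply incr_comp; trivial.
  - intros x _ n. exists n. intros x' _ agree i lt. rewrite agree; trivial.
  - intros x Ix. tauto.
Qed.

Lemma shared_solutions_of_pointclass Gamma delta R :
  is_pointclass_rep Gamma delta -> wadge_downward_closed Gamma -> all_ramsey Gamma ->
  (forall x y, R x y -> Gamma x) ->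
  (forall x, (exists y, R x y) -> forall y, R x y <-> HS x y) ->
  shared_solutions delta R.
Proof.
  intros [_ [_ [_ names_ext]]] wadge ramsey R_Gamma R_HS.
  apply (shared_solutions_of_class Gamma ramsey (pullback_of_wadge_closed Gamma wadge)).
  - intros q z _ [w Rzw]. exact (R_Gamma z w Rzw).
  - exact names_ext.
  - intros z h dom Hh. exact (proj2 (R_HS z dom h) Hh).
Qed.

Lemma shared_solutions_wFindHS_Sigma01 : shared_solutions delta_open wFindHS_Sigma01.
Proof.
  apply shared_solutions_open. intros z h [w [? [? _]]] Hh. split; [|split; [|split]]; auto.
Qed.

Lemma shared_solutions_wFindHS_Pi01 : shared_solutions delta_open wFindHS_Pi01.
Proof.
  apply shared_solutions_open. intros z h [w [? [? _]]] Hh. split; [|split; [|split]]; auto.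
Qed.

Lemma shared_solutions_wFindHS_Delta01 : shared_solutions delta_clopen wFindHS_Delta01.
Proof.
  apply shared_solutions_clopen. intros z h [w [? [? _]]] Hh. split; [|split; [|split]]; auto.
Qed.

Lemma shared_solutions_Sigma01_RT : shared_solutions delta_open Sigma01_RT.
Proof. apply shared_solutions_open. intros z h [w [? _]] Hh. split; auto. Qed.

Lemma shared_solutions_Delta01_RT : shared_solutions delta_clopen Delta01_RT.
Proof. apply shared_solutions_clopen. intros z h [w [? _]] Hh. split; auto. Qed.

Theorem mainTheorem14 :
  (forall (Gamma : ((nat -> nat) -> Prop) -> Prop)
          (delta : (nat -> nat) -> ((nat -> nat) -> Prop) -> Prop),
     is_pointclass_rep Gamma delta ->
     wadge_downward_closed Gamma ->
     all_ramsey Gamma ->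
     restriction_property Gamma ->
     forall R : ((nat -> nat) -> Prop) -> (nat -> nat) -> Prop,
       (forall x y, R x y -> Gamma x) ->
       (forall x, (exists y, R x y) -> forall y, R x y <-> HS x y) ->
       ~ sW_le delta_2 delta_2 id2 delta delta_RS R)
  /\
  (~ sW_le delta_2 delta_2 id2 delta_open delta_RS wFindHS_Sigma01 /\
   ~ sW_le delta_2 delta_2 id2 delta_open delta_RS wFindHS_Pi01 /\
   ~ sW_le delta_2 delta_2 id2 delta_clopen delta_RS wFindHS_Delta01 /\
   ~ sW_le delta_2 delta_2 id2 delta_open delta_RS Sigma01_RT /\
   ~ sW_le delta_2 delta_2 id2 delta_clopen delta_RS Delta01_RT)
  /\
  (~ sW_le delta_closed delta_Baire UC_Baire delta_open delta_RS wFindHS_Sigma01 /\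
   ~ sW_le delta_closed delta_Baire UC_Baire delta_open delta_RS wFindHS_Pi01 /\
   ~ sW_le delta_closed delta_Baire UC_Baire delta_clopen delta_RS wFindHS_Delta01 /\
   ~ sW_le delta_closed delta_Baire UC_Baire delta_open delta_RS Sigma01_RT /\
   ~ sW_le delta_closed delta_Baire UC_Baire delta_clopen delta_RS Delta01_RT).
Proof.
  split.
  -
    intros Gamma delta rep wadge ramsey _ R R_Gamma R_HS.
    exact (id2_not_sW_le _ _ (shared_solutions_of_pointclass Gamma delta R
                                rep wadge ramsey R_Gamma R_HS)).
  - split; repeat split;
      auto using id2_not_sW_le, UC_Baire_not_sW_le, shared_solutions_wFindHS_Sigma01,
        shared_solutions_wFindHS_Pi01, shared_solutions_wFindHS_Delta01,
        shared_solutions_Sigma01_RT, shared_solutions_Delta01_RT.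
Qed.
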